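(* Let $a,b$ be coprime positive integers with $ab\ne1$. Then $$M_{a,b}(B)=\#\left\{(s,t)\in\mathbb{Z}^2:\ \begin{array}{l}\gcd(s,t)=1,\ s(s-at)\ne0,\ s/t\ne(a^2-b^2)/(2a),\\ t>0,\ 0<-Q_3(s,t),\\ 0<-Q_j(s,t)\le \lambda B/\max\{a,b\}\text{ for }j=1,2\end{array}\right\}+O(1),$$ where $\lambda=\gcd(Q_1(s,t),Q_2(s,t))$.
   Context: $M_{a,b}(B)$ is the number of $(x,y,z)\in\mathbb{N}^3$ with $(a^2-b^2)x^2+(a^2+b^2)y^2=2z^2$, $\gcd(x,y)=1$ and $\max\{a,b\}\max\{x,y\}\le B$. The binary quadratic forms are $Q_1(s,t)=2s^2+(a^2-b^2)t^2-4ast$, $Q_2(s,t)=-2s^2+(a^2-b^2)t^2$, $Q_3(s,t)=-2as^2+2(a^2-b^2)st-a(a^2-b^2)t^2$. The implied constant is absolute. *)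

From Stdlib Require Import ZArith Reals List.
Import ListNotations.
Open Scope Z_scope.

Definition card_is {T : Type} (P : T -> Prop) (n : nat) : Prop :=
  exists l : list T, NoDup l /\ length l = n /\ (forall x, In x l <-> P x).

Definition Q1 (a b s t : Z) : Z := 2*s^2 + (a^2 - b^2)*t^2 - 4*a*s*t.
Definition Q2 (a b s t : Z) : Z := -2*s^2 + (a^2 - b^2)*t^2.
Definition Q3 (a b s t : Z) : Z := -2*a*s^2 + 2*(a^2 - b^2)*s*t - a*(a^2 - b^2)*t^2.

Definition M_set (a b : Z) (B : R) (p : Z * Z * Z) : Prop :=
  let '(x, y, z) := p in
  0 < x /\ 0 < y /\ 0 < z /\
  (a^2 - b^2)*x^2 + (a^2 + b^2)*y^2 = 2*z^2 /\
  Z.gcd x y = 1 /\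
  (IZR (Z.max a b * Z.max x y) <= B)%R.

Definition ST_set (a b : Z) (B : R) (p : Z * Z) : Prop :=
  let '(s, t) := p in
  let lam := Z.gcd (Q1 a b s t) (Q2 a b s t) in
  Z.gcd s t = 1 /\ s * (s - a*t) <> 0 /\
  (IZR s / IZR t <> IZR (a^2 - b^2) / IZR (2*a))%R /\
  0 < t /\ 0 < - Q3 a b s t /\
  0 < - Q1 a b s t /\ (IZR (- Q1 a b s t) <= IZR lam * B / IZR (Z.max a b))%R /\
  0 < - Q2 a b s t /\ (IZR (- Q2 a b s t) <= IZR lam * B / IZR (Z.max a b))%R.

From Stdlib Require Import ZArith Reals List Lia Lra Classical.
Import ListNotations.
Open Scope Z_scope.

(* With [D = a^2 - b^2] and [E = a^2 + b^2], the forms parametrize the conic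
   [D X^2 + E Y^2 = 2 Z^2]: [D Q1^2 + E Q2^2 = 2 Q3^2], and a point [(x, y, z)]
   of the conic is [(Q1 : Q2 : Q3)(s, t)] for the line
   [(s : t) = (D (a x + z) : D x - E y + 2 a z)].  Normalizing both sides --
   [(s, t)] primitive with [t > 0], and [(x, y, z) = -(Q1, Q2, Q3)(s, t) / lambda]
   -- turns this into a bijection between the points counted by [M_{a,b}(B)]
   and the pairs [(s, t)] on the right, up to the three excluded lines.  Here
   [lambda] divides [Q3] because [lambda^2 | 2 Q3^2] and [2] is squarefree, the
   sign conditions hold because [Q2] and [Q3] are never both positive, and the
   height condition transfers because [max(x, y) = max(-Q1, -Q2) / lambda]. *)

Lemma card_is_of_incl {T : Type} (P : T -> Prop) (L : list T) :
  (forall x, P x -> In x L) -> exists n, card_is P n.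
Proof.
  revert P; induction L as [|a L IH]; intros P HP.
  - exists 0%nat, []. repeat split; [constructor| |]; intros H; [destruct H|].
    exact (HP x H).
  - destruct (IH (fun x => P x /\ x <> a)) as [n [l [Hnd [Hl Hin]]]].
    { intros x [Hx Hxa]. destruct (HP x Hx); [congruence|assumption]. }
    destruct (classic (P a)) as [Pa|nPa].
    + exists (S n), (a :: l). split; [|split].
      * constructor; [|exact Hnd]. intros H. apply Hin in H. tauto.
      * simpl; congruence.
      * intros x; simpl; split.
        -- intros [<-|H]; [exact Pa|apply Hin in H; tauto].
        -- intros Px. destruct (classic (x = a)) as [->|Hxa]; [left; reflexivity|].
           right; apply Hin; tauto.
    + exists n, l. split; [exact Hnd|split; [exact Hl|]].
      intros x; split.
      * intros H; apply Hin in H; tauto.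
      * intros Px. apply Hin. split; [exact Px|]. intros ->; tauto.
Qed.

Section Counting.
Context {A B : Type}.

Lemma card_is_of_image (P : A -> Prop) (Q : B -> Prop) (g : A -> B) m :
  card_is P m -> (forall q, Q q -> exists p, P p /\ g p = q) ->
  exists n, card_is Q n.
Proof.
  intros [l [_ [_ Hl]]] HQ. apply (card_is_of_incl Q (map g l)).
  intros q Hq. destruct (HQ q Hq) as [p [Hp <-]]. apply in_map, Hl, Hp.
Qed.

Lemma card_le_of_left_inverse (P : A -> Prop) (Q : B -> Prop) (h : A -> B)
    (h' : B -> A) (X : list B) m n :
  card_is P m -> card_is Q n ->
  (forall p, P p -> h' (h p) = p) ->
  (forall p, P p -> Q (h p) \/ In (h p) X) ->
  (m <= length X + n)%nat.
Proof.
  intros [lP [HndP [<- HP]]] [lQ [_ [<- HQ]]] Hinv Hmaps.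
  rewrite <- (length_map h lP), <- length_app.
  apply NoDup_incl_length.
  - apply NoDup_map_NoDup_ForallPairs; [|exact HndP].
    intros p p' Hp Hp' E.
    rewrite <- (Hinv p), <- (Hinv p'), E by (apply HP; assumption). reflexivity.
  - intros q Hq. apply in_map_iff in Hq as [p [<- Hp]]. apply in_or_app.
    destruct (Hmaps p (proj1 (HP p) Hp)); [right; apply HQ|left]; assumption.
Qed.

End Counting.

Definition diffsq (a b : Z) : Z := a^2 - b^2.
Definition sumsq (a b : Z) : Z := a^2 + b^2.

Lemma sumsq_pos a b : 0 < a -> 0 < sumsq a b.
Proof. unfold sumsq; nia. Qed.

Lemma diffsq_neq0 a b : 0 < a -> 0 < b -> Z.gcd a b = 1 -> a * b <> 1 ->
  diffsq a b <> 0.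
Proof.
  unfold diffsq. intros Ha Hb Hg Hab HD.
  assert (a = b) as <- by nia. rewrite Z.gcd_diag in Hg. lia.
Qed.

Lemma Q1_homogeneous a b c s t : Q1 a b (c*s) (c*t) = c^2 * Q1 a b s t.
Proof. unfold Q1; ring. Qed.
Lemma Q2_homogeneous a b c s t : Q2 a b (c*s) (c*t) = c^2 * Q2 a b s t.
Proof. unfold Q2; ring. Qed.
Lemma Q3_homogeneous a b c s t : Q3 a b (c*s) (c*t) = c^2 * Q3 a b s t.
Proof. unfold Q3; ring. Qed.

Lemma Q_conic a b s t :
  diffsq a b * Q1 a b s t ^ 2 + sumsq a b * Q2 a b s t ^ 2 = 2 * Q3 a b s t ^ 2.
Proof. unfold Q1, Q2, Q3, diffsq, sumsq; ring. Qed.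

Lemma Q1_Q3_lin a b s t : a * Q1 a b s t + Q3 a b s t = -2 * sumsq a b * s * t.
Proof. unfold Q1, Q3, sumsq; ring. Qed.

Lemma Q123_lin a b s t :
  diffsq a b * Q1 a b s t - sumsq a b * Q2 a b s t + 2 * a * Q3 a b s t
  = -2 * diffsq a b * sumsq a b * t^2.
Proof. unfold Q1, Q2, Q3, diffsq, sumsq; ring. Qed.

Section ConicLine.
Variables a b x y z : Z.
Hypothesis Hconic : diffsq a b * x^2 + sumsq a b * y^2 = 2 * z^2.
Let s0 := diffsq a b * (a*x + z).
Let t0 := diffsq a b * x - sumsq a b * y + 2*a*z.

Lemma Q1_conic_line : Q1 a b s0 t0 = -2 * diffsq a b * sumsq a b * t0 * x.
Proof.
  transitivity (-2 * diffsq a b * sumsq a b * t0 * x + diffsq a b * sumsq a b *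
    (diffsq a b * x^2 + sumsq a b * y^2 - 2 * z^2));
    [unfold s0, t0, Q1, diffsq, sumsq; ring|rewrite Hconic; ring].
Qed.

Lemma Q2_conic_line : Q2 a b s0 t0 = -2 * diffsq a b * sumsq a b * t0 * y.
Proof.
  transitivity (-2 * diffsq a b * sumsq a b * t0 * y - diffsq a b * sumsq a b *
    (diffsq a b * x^2 + sumsq a b * y^2 - 2 * z^2));
    [unfold s0, t0, Q2, diffsq, sumsq; ring|rewrite Hconic; ring].
Qed.

Lemma Q3_conic_line : Q3 a b s0 t0 = -2 * diffsq a b * sumsq a b * t0 * z.
Proof.
  transitivity (-2 * diffsq a b * sumsq a b * t0 * z - a * diffsq a b * sumsq a b *
    (diffsq a b * x^2 + sumsq a b * y^2 - 2 * z^2));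
    [unfold s0, t0, Q3, diffsq, sumsq; ring|rewrite Hconic; ring].
Qed.

End ConicLine.

Lemma gcd_pos_of_neq0 m n : n <> 0 -> 0 < Z.gcd m n.
Proof.
  intros Hn. pose proof (Z.gcd_nonneg m n).
  assert (Z.gcd m n <> 0) by (rewrite Z.gcd_eq_0; lia). lia.
Qed.

Lemma divide_of_sq_divide_double_sq l w : 0 < l -> (l^2 | 2 * w^2) -> (l | w).
Proof.
  intros Hl [c Hc].
  set (g := Z.gcd l w).
  assert (Hg : 0 < g) by (unfold g; rewrite Z.gcd_comm; apply gcd_pos_of_neq0; lia).
  destruct (Z.gcd_divide_l l w) as [l' Hl']. destruct (Z.gcd_divide_r l w) as [w' Hw'].
  fold g in Hl', Hw'.
  assert (Hcop : Z.gcd l' w' = 1).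
  { rewrite <- (Z.div_mul l' g), <- (Z.div_mul w' g), <- Hl', <- Hw' by lia.
    apply Z.gcd_div_gcd; [lia|reflexivity]. }
  assert (Hl'p : 0 < l') by nia.
  assert (Hc' : 2 * w'^2 = c * l'^2).
  { rewrite Hl', Hw' in Hc. apply (Z.mul_reg_l _ _ (g^2)); [lia|nia]. }
  assert (Hd : (l' | 2)).
  { apply (Z.gauss _ w'); [|exact Hcop]. rewrite Z.mul_comm.
    apply (Z.gauss _ w'); [|exact Hcop]. exists (c * l'). nia. }
  apply Z.divide_pos_le in Hd; [|lia].
  assert (l' = 1 \/ l' = 2) as [E|E] by lia.
  - exists w'. rewrite Hw', Hl', E. ring.
  - exfalso. subst l'.
    destruct (Z.Even_or_Odd w') as [[q ->]|[q ->]]; [|nia].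
    rewrite Z.gcd_mul_diag_l in Hcop; lia.
Qed.

Lemma gcd_Q12_divide_Q3 a b s t : 0 < Z.gcd (Q1 a b s t) (Q2 a b s t) ->
  (Z.gcd (Q1 a b s t) (Q2 a b s t) | Q3 a b s t).
Proof.
  intros Hl. apply divide_of_sq_divide_double_sq; [exact Hl|].
  destruct (Z.gcd_divide_l (Q1 a b s t) (Q2 a b s t)) as [u Hu].
  destruct (Z.gcd_divide_r (Q1 a b s t) (Q2 a b s t)) as [v Hv].
  exists (diffsq a b * u^2 + sumsq a b * v^2).
  rewrite <- Q_conic. set (l := Z.gcd _ _) in *. rewrite Hu, Hv. ring.
Qed.

Definition normalize (s t : Z) : Z * Z :=
  let d := Z.gcd s t in
  if t <? 0 then (- (s / d), - (t / d)) else (s / d, t / d).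

Lemma normalize_spec s0 t0 s t : t0 <> 0 -> normalize s0 t0 = (s, t) ->
  0 < t /\ Z.gcd s t = 1 /\ exists c, c <> 0 /\ s0 = c * s /\ t0 = c * t.
Proof.
  intros Ht0. unfold normalize.
  set (d := Z.gcd s0 t0).
  assert (Hd : 0 < d) by apply gcd_pos_of_neq0, Ht0.
  destruct (Z.gcd_divide_l s0 t0) as [s' Hs']. destruct (Z.gcd_divide_r s0 t0) as [t' Ht'].
  fold d in Hs', Ht'.
  assert (Hcop : Z.gcd s' t' = 1).
  { rewrite <- (Z.div_mul s' d), <- (Z.div_mul t' d), <- Hs', <- Ht' by lia.
    apply Z.gcd_div_gcd; [lia|reflexivity]. }
  rewrite Hs', Ht', !Z.div_mul by lia.
  destruct (t' * d <? 0) eqn:Hlt; intros [= <- <-].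
  - apply Z.ltb_lt in Hlt.
    split; [nia|split; [rewrite Z.gcd_opp_l, Z.gcd_opp_r; exact Hcop|]].
    exists (- d). split; [lia|split; ring].
  - apply Z.ltb_ge in Hlt.
    split; [nia|split; [exact Hcop|]].
    exists d. split; [lia|split; ring].
Qed.

Lemma primitive_pair_unique s t s' t' :
  Z.gcd s t = 1 -> Z.gcd s' t' = 1 -> 0 < t -> 0 < t' -> s * t' = s' * t ->
  s = s' /\ t = t'.
Proof.
  intros Hg Hg' Ht Ht' E.
  assert (Htt' : (t | t')).
  { apply (Z.gauss _ s); [exists s'; lia|rewrite Z.gcd_comm; exact Hg]. }
  assert (Ht't : (t' | t)).
  { apply (Z.gauss _ s'); [exists s; lia|rewrite Z.gcd_comm; exact Hg']. }
  assert (t = t') as <- by (apply Z.divide_antisym_nonneg; auto; lia).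
  split; [nia|reflexivity].
Qed.

Lemma normalize_unique s0 t0 s t : t0 <> 0 -> Z.gcd s t = 1 -> 0 < t ->
  s0 * t = s * t0 -> normalize s0 t0 = (s, t).
Proof.
  intros Ht0 Hg Ht E.
  destruct (normalize s0 t0) as [s' t'] eqn:En.
  destruct (normalize_spec s0 t0 s' t' Ht0 En) as [Ht' [Hg' [c [Hc [-> ->]]]]].
  destruct (primitive_pair_unique s' t' s t) as [-> ->]; auto.
  apply (Z.mul_reg_l _ _ c); [exact Hc|lia].
Qed.

Lemma proportional_coprime_mul x y u v : x <> 0 -> Z.gcd x y = 1 ->
  x * v = y * u -> exists k, u = k * x /\ v = k * y.
Proof.
  intros Hx Hg E.
  destruct (Z.gauss x y u) as [k Hk]; [exists v; lia|exact Hg|].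
  exists k. split; [exact Hk|].
  apply (Z.mul_reg_l _ _ x); [exact Hx|]. rewrite E, Hk. ring.
Qed.

Definition xyz_of_st (a b : Z) (q : Z * Z) : Z * Z * Z :=
  let '(s, t) := q in
  let l := Z.gcd (Q1 a b s t) (Q2 a b s t) in
  ((- Q1 a b s t) / l, (- Q2 a b s t) / l, (- Q3 a b s t) / l).

Definition st_of_xyz (a b : Z) (p : Z * Z * Z) : Z * Z :=
  let '(x, y, z) := p in
  normalize (diffsq a b * (a*x + z)) (diffsq a b * x - sumsq a b * y + 2*a*z).

Lemma xyz_of_st_eq a b s t k x y z : k < 0 -> Z.gcd x y = 1 ->
  Q1 a b s t = k * x -> Q2 a b s t = k * y -> Q3 a b s t = k * z ->
  xyz_of_st a b (s, t) = (x, y, z).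
Proof.
  intros Hk Hg H1 H2 H3. unfold xyz_of_st. rewrite H1, H2, H3.
  rewrite Z.gcd_mul_mono_l, Hg, Z.mul_1_r, Z.abs_neq by lia.
  replace (- (k*x)) with (x * -k) by ring.
  replace (- (k*y)) with (y * -k) by ring.
  replace (- (k*z)) with (z * -k) by ring.
  rewrite !Z.div_mul by lia. reflexivity.
Qed.

Section Forms.
Variables a b : Z.
Hypothesis Ha : 0 < a.
Hypothesis HD : diffsq a b <> 0.

Lemma Q12_eq0 s t : Q1 a b s t = 0 -> Q2 a b s t = 0 -> s = 0 /\ t = 0.
Proof.
  intros H1 H2.
  assert (Hs : Q1 a b s t + Q2 a b s t = 2 * t * (diffsq a b * t - 2 * a * s))
    by (unfold Q1, Q2, diffsq; ring).
  rewrite H1, H2 in Hs.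
  destruct (Z.eq_dec t 0) as [->|Ht].
  - unfold Q2 in H2. split; [nia|reflexivity].
  - assert (E1 : diffsq a b * t = 2 * a * s) by nia.
    assert (E2 : 4 * a^2 * Q2 a b s t = - 2 * (2*a*s)^2 + 4 * a^2 * diffsq a b * t^2)
      by (unfold Q2, diffsq; ring).
    rewrite <- E1, H2 in E2.
    assert (2 * a^2 - diffsq a b = sumsq a b) by (unfold diffsq, sumsq; ring).
    pose proof (sumsq_pos a b Ha). exfalso. nia.
Qed.

Lemma Q2_Q3_not_both_pos s t : ~ (0 < Q2 a b s t /\ 0 < Q3 a b s t).
Proof.
  intros [H2 H3].
  destruct (Z_lt_le_dec 0 (diffsq a b)) as [Hp|Hn].
  - assert (2 * a * (- Q3 a b s t) =
      (2*a*s - diffsq a b * t)^2 + diffsq a b * sumsq a b * t^2)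
      by (unfold Q3, diffsq, sumsq; ring).
    pose proof (sumsq_pos a b Ha). nia.
  - unfold Q2, diffsq in *. nia.
Qed.

Lemma Q_eq_neg_mul s t x y z : ~ (s = 0 /\ t = 0) ->
  0 < x -> 0 < y -> 0 < z -> Z.gcd x y = 1 ->
  x * Q2 a b s t = y * Q1 a b s t -> x * Q3 a b s t = z * Q1 a b s t ->
  exists k, k < 0 /\
    Q1 a b s t = k * x /\ Q2 a b s t = k * y /\ Q3 a b s t = k * z.
Proof.
  intros Hst Hx Hy Hz Hg E12 E13.
  destruct (proportional_coprime_mul x y _ _ ltac:(lia) Hg E12) as [k [H1 H2]].
  assert (H3 : Q3 a b s t = k * z) by (apply (Z.mul_reg_l _ _ x); nia).
  exists k. repeat split; try assumption.
  destruct (Z_lt_le_dec k 0) as [Hk|Hk]; [exact Hk|exfalso].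
  destruct (Z.eq_dec k 0) as [->|Hk0].
  - apply Hst, Q12_eq0; lia.
  - apply (Q2_Q3_not_both_pos s t). nia.
Qed.

Lemma st_of_xyz_spec x y z s t : 0 < x -> 0 < y -> 0 < z -> Z.gcd x y = 1 ->
  diffsq a b * x^2 + sumsq a b * y^2 = 2 * z^2 ->
  st_of_xyz a b (x, y, z) = (s, t) ->
  0 < t /\ Z.gcd s t = 1 /\ exists k, k < 0 /\
    Q1 a b s t = k * x /\ Q2 a b s t = k * y /\ Q3 a b s t = k * z.
Proof.
  intros Hx Hy Hz Hg Hconic Hst.
  pose proof (Q1_conic_line a b x y z Hconic) as E1.
  pose proof (Q2_conic_line a b x y z Hconic) as E2.
  pose proof (Q3_conic_line a b x y z Hconic) as E3.
  unfold st_of_xyz in Hst.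
  set (s0 := diffsq a b * (a*x + z)) in *.
  set (t0 := diffsq a b * x - sumsq a b * y + 2*a*z) in *.
  set (N := -2 * diffsq a b * sumsq a b * t0) in *.
  assert (Ht0 : t0 <> 0).
  { intros E. unfold N in E2. rewrite E in E2. unfold Q2, s0 in E2. nia. }
  destruct (normalize_spec s0 t0 s t Ht0 Hst) as [Ht [Hcop [c [Hc [Es Et]]]]].
  split; [exact Ht|split; [exact Hcop|]].
  rewrite Es, Et in E1, E2, E3.
  rewrite Q1_homogeneous in E1. rewrite Q2_homogeneous in E2.
  rewrite Q3_homogeneous in E3.
  assert (Hc2 : c^2 <> 0) by nia.
  apply Q_eq_neg_mul; auto.
  - intros [_ ->]. lia.
  - apply (Z.mul_reg_l _ _ (c^2)); [exact Hc2|].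
    transitivity (x * (c^2 * Q2 a b s t)); [ring|rewrite E2].
    transitivity (y * (c^2 * Q1 a b s t)); [rewrite E1|]; ring.
  - apply (Z.mul_reg_l _ _ (c^2)); [exact Hc2|].
    transitivity (x * (c^2 * Q3 a b s t)); [ring|rewrite E3].
    transitivity (z * (c^2 * Q1 a b s t)); [rewrite E1|]; ring.
Qed.

Lemma st_of_xyz_inv s t l x y z : Z.gcd s t = 1 -> 0 < t -> l <> 0 ->
  - Q1 a b s t = l * x -> - Q2 a b s t = l * y -> - Q3 a b s t = l * z ->
  st_of_xyz a b (x, y, z) = (s, t).
Proof.
  intros Hg Ht Hl H1 H2 H3. unfold st_of_xyz.
  set (K := 2 * diffsq a b * sumsq a b).
  assert (Es : l * (diffsq a b * (a*x + z)) = K * s * t).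
  { transitivity (- diffsq a b * (a * (- (l*x)) + - (l*z))); [ring|].
    rewrite <- H1, <- H3, !Z.opp_involutive, Q1_Q3_lin. unfold K; ring. }
  assert (Et : l * (diffsq a b * x - sumsq a b * y + 2*a*z) = K * t^2).
  { transitivity (- (diffsq a b * (- (l*x)) - sumsq a b * (- (l*y)) + 2 * a * (- (l*z))));
      [ring|].
    rewrite <- H1, <- H2, <- H3, !Z.opp_involutive, Q123_lin. unfold K; ring. }
  assert (HK : K <> 0) by (pose proof (sumsq_pos a b Ha); unfold K; nia).
  apply normalize_unique; auto.
  - intros E. rewrite E, Z.mul_0_r in Et. nia.
  - apply (Z.mul_reg_l _ _ l); [exact Hl|].
    transitivity (l * (diffsq a b * (a*x + z)) * t); [ring|rewrite Es].
    transitivity (s * (l * (diffsq a b * x - sumsq a b * y + 2*a*z)));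
      [rewrite Et|]; ring.
Qed.

End Forms.

Lemma xyz_of_st_spec a b s t :
  0 < - Q1 a b s t -> 0 < - Q2 a b s t -> 0 < - Q3 a b s t ->
  exists x y z, xyz_of_st a b (s, t) = (x, y, z) /\
    0 < x /\ 0 < y /\ 0 < z /\ Z.gcd x y = 1 /\
    diffsq a b * x^2 + sumsq a b * y^2 = 2 * z^2 /\
    - Q1 a b s t = Z.gcd (Q1 a b s t) (Q2 a b s t) * x /\
    - Q2 a b s t = Z.gcd (Q1 a b s t) (Q2 a b s t) * y /\
    - Q3 a b s t = Z.gcd (Q1 a b s t) (Q2 a b s t) * z.
Proof.
  intros H1 H2 H3.
  set (l := Z.gcd (Q1 a b s t) (Q2 a b s t)).
  assert (Hl : 0 < l) by (apply gcd_pos_of_neq0; lia).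
  destruct (Z.gcd_divide_l (Q1 a b s t) (Q2 a b s t)) as [q1 Hq1].
  destruct (Z.gcd_divide_r (Q1 a b s t) (Q2 a b s t)) as [q2 Hq2].
  destruct (gcd_Q12_divide_Q3 a b s t Hl) as [q3 Hq3].
  fold l in Hq1, Hq2, Hq3.
  exists (-q1), (-q2), (-q3). split.
  { unfold xyz_of_st. fold l. rewrite Hq1, Hq2, Hq3.
    rewrite <- !Z.mul_opp_l, !Z.div_mul by lia. reflexivity. }
  rewrite Hq1 in H1. rewrite Hq2 in H2. rewrite Hq3 in H3.
  split; [nia|split; [nia|split; [nia|split]]].
  { rewrite Z.gcd_opp_l, Z.gcd_opp_r.
    rewrite <- (Z.div_mul q1 l), <- (Z.div_mul q2 l), <- Hq1, <- Hq2 by lia.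
    apply Z.gcd_div_gcd; [lia|reflexivity]. }
  split; [|rewrite Hq1, Hq2, Hq3; repeat split; ring].
  pose proof (Q_conic a b s t) as C. rewrite Hq1, Hq2, Hq3 in C.
  apply (Z.mul_reg_l _ _ (l^2)); [nia|].
  transitivity (diffsq a b * (q1*l)^2 + sumsq a b * (q2*l)^2); [ring|].
  rewrite C. ring.
Qed.

Lemma scaled_bound_iff (l M x : Z) (B : R) : 0 < l -> 0 < M ->
  (IZR (l * x) <= IZR l * B / IZR M)%R <-> (IZR (M * x) <= B)%R.
Proof.
  intros Hl HM. rewrite !mult_IZR.
  apply IZR_lt in Hl. apply IZR_lt in HM.
  replace (IZR l * B / IZR M)%R with (IZR l * (B / IZR M))%R by (field; lra).
  split; intros H.
  - apply Rmult_le_reg_l in H; [|lra].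
    apply (Rmult_le_compat_l (IZR M)) in H; [|lra].
    replace (IZR M * (B / IZR M))%R with B in H by (field; lra). exact H.
  - apply Rmult_le_compat_l; [lra|].
    apply (Rmult_le_reg_l (IZR M)); [lra|].
    replace (IZR M * (B / IZR M))%R with B by (field; lra). exact H.
Qed.

Lemma max_bound_iff (M x y : Z) (B : R) : 0 <= M ->
  (IZR (M * Z.max x y) <= B)%R <-> (IZR (M * x) <= B /\ IZR (M * y) <= B)%R.
Proof.
  intros HM.
  assert (Hle : forall u v, u <= v -> (IZR (M * v) <= B -> IZR (M * u) <= B)%R)
    by (intros u v Huv H; apply Rle_trans with (IZR (M * v)); [apply IZR_le; nia|exact H]).
  destruct (Z.max_spec x y) as [[Hxy ->]|[Hxy ->]]; split.
  - intros H. split; [apply (Hle x y); [lia|]|]; exact H.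
  - intros [_ H]. exact H.
  - intros H. split; [|apply (Hle y x); [lia|]]; exact H.
  - intros [H _]. exact H.
Qed.

Lemma IZR_div_eq_mul s t u v : t <> 0 -> v <> 0 ->
  (IZR s / IZR t = IZR u / IZR v)%R -> s * v = u * t.
Proof.
  intros Ht Hv E. apply eq_IZR. rewrite !mult_IZR.
  apply not_0_IZR in Ht. apply not_0_IZR in Hv.
  apply (Rmult_eq_reg_r (/ (IZR t * IZR v))).
  - replace (IZR s * IZR v * / (IZR t * IZR v))%R with (IZR s / IZR t)%R by (field; auto).
    rewrite E. field; auto.
  - apply Rinv_neq_0_compat, Rmult_integral_contrapositive; auto.
Qed.

Definition range (n : Z) : list Z := map Z.of_nat (seq 0 (Z.to_nat n)).

Lemma in_range x n : 0 <= x < n -> In x (range n).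
Proof.
  intros H. apply in_map_iff. exists (Z.to_nat x). split; [lia|].
  apply in_seq. lia.
Qed.

Definition box (a b : Z) (B : R) : list (Z * Z * Z) :=
  list_prod (list_prod (range (up B)) (range (up B)))
            (range (sumsq a b * up B * up B + 1)).

Lemma M_set_in_box a b B p : 0 < a -> 0 < b -> M_set a b B p -> In p (box a b B).
Proof.
  destruct p as [[x y] z]. intros Ha Hb [Hx [Hy [Hz [Hconic [_ HB]]]]].
  apply max_bound_iff in HB as [HBx HBy]; [|lia].
  set (K := up B). destruct (archimed B) as [HK _]. fold K in HK.
  assert (Hx' : x < K).
  { apply lt_IZR. apply Rle_lt_trans with B; [|exact HK].
    apply Rle_trans with (IZR (Z.max a b * x)); [apply IZR_le; nia|exact HBx]. }
  assert (Hy' : y < K).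
  { apply lt_IZR. apply Rle_lt_trans with B; [|exact HK].
    apply Rle_trans with (IZR (Z.max a b * y)); [apply IZR_le; nia|exact HBy]. }
  assert (Hz' : z < sumsq a b * K * K + 1).
  { unfold sumsq. assert (z <= z^2) by nia.
    assert (x^2 <= K^2) by nia. assert (y^2 <= K^2) by nia.
    assert (0 <= b^2) by nia. assert (0 <= a^2) by nia.
    assert ((a^2 - b^2) * x^2 <= (a^2 + b^2) * K^2) by nia.
    assert ((a^2 + b^2) * y^2 <= (a^2 + b^2) * K^2) by nia.
    nia. }
  unfold box. apply in_prod; [apply in_prod|]; apply in_range; lia.
Qed.

Definition exceptional_st (a b : Z) : list (Z * Z) :=
  [normalize 0 1; normalize a 1; normalize (diffsq a b) (2 * a)].

Lemma not_exceptional_st a b s t : 0 < a -> Z.gcd s t = 1 -> 0 < t ->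
  ~ In (s, t) (exceptional_st a b) ->
  s * (s - a * t) <> 0 /\ s * (2 * a) <> diffsq a b * t.
Proof.
  intros Ha Hg Ht Hexc. split.
  - intros E. apply Hexc. apply Z.mul_eq_0 in E as [E|E].
    + left. apply normalize_unique; auto; lia.
    + right; left. apply normalize_unique; auto; lia.
  - intros E. apply Hexc. right; right; left.
    apply normalize_unique; auto; lia.
Qed.

Section Correspondence.
Variables (a b : Z) (B : R).
Hypotheses (Ha : 0 < a) (Hb : 0 < b) (Hab : Z.gcd a b = 1) (Hab1 : a * b <> 1).

Let HD : diffsq a b <> 0 := diffsq_neq0 a b Ha Hb Hab Hab1.

Lemma xyz_of_st_of_xyz p : M_set a b B p -> xyz_of_st a b (st_of_xyz a b p) = p.
Proof.
  destruct p as [[x y] z]. intros [Hx [Hy [Hz [Hconic [Hg _]]]]].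
  destruct (st_of_xyz a b (x, y, z)) as [s t] eqn:Hst.
  destruct (st_of_xyz_spec a b Ha HD x y z s t) as [_ [_ [k [Hk [H1 [H2 H3]]]]]];
    auto.
  apply (xyz_of_st_eq a b s t k); auto.
Qed.

Lemma st_of_xyz_in_ST p : M_set a b B p ->
  ST_set a b B (st_of_xyz a b p) \/ In (st_of_xyz a b p) (exceptional_st a b).
Proof.
  destruct p as [[x y] z]. intros [Hx [Hy [Hz [Hconic [Hg HB]]]]].
  destruct (st_of_xyz a b (x, y, z)) as [s t] eqn:Hst.
  destruct (st_of_xyz_spec a b Ha HD x y z s t) as [Ht [Hcop [k [Hk [H1 [H2 H3]]]]]];
    auto.
  destruct (classic (In (s, t) (exceptional_st a b))) as [Hexc|Hexc]; [right; exact Hexc|left].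
  destruct (not_exceptional_st a b s t Ha Hcop Ht Hexc) as [Hs Hratio].
  assert (Hl : Z.gcd (Q1 a b s t) (Q2 a b s t) = - k)
    by (rewrite H1, H2, Z.gcd_mul_mono_l, Hg; lia).
  apply max_bound_iff in HB as [HBx HBy]; [|lia].
  unfold ST_set. rewrite Hl, H1, H2, H3, <- !Z.mul_opp_l.
  repeat split; auto; try (apply Z.mul_pos_pos; lia).
  - intros E. apply Hratio, IZR_div_eq_mul; [lia|lia|exact E].
  - apply scaled_bound_iff; [lia|lia|exact HBx].
  - apply scaled_bound_iff; [lia|lia|exact HBy].
Qed.

Lemma st_of_xyz_of_st q : ST_set a b B q -> st_of_xyz a b (xyz_of_st a b q) = q.
Proof.
  destruct q as [s t]. intros [Hg [_ [_ [Ht [H3 [H1 [_ [H2 _]]]]]]]].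
  destruct (xyz_of_st_spec a b s t H1 H2 H3)
    as [x [y [z [-> [Hx [_ [_ [_ [_ [E1 [E2 E3]]]]]]]]]]].
  apply (st_of_xyz_inv a b Ha HD s t (Z.gcd (Q1 a b s t) (Q2 a b s t))); auto.
  nia.
Qed.

Lemma xyz_of_st_in_M q : ST_set a b B q -> M_set a b B (xyz_of_st a b q).
Proof.
  destruct q as [s t]. intros [_ [_ [_ [_ [H3 [H1 [HB1 [H2 HB2]]]]]]]].
  destruct (xyz_of_st_spec a b s t H1 H2 H3)
    as [x [y [z [-> [Hx [Hy [Hz [Hgxy [Hconic [E1 [E2 _]]]]]]]]]]].
  assert (Hl : 0 < Z.gcd (Q1 a b s t) (Q2 a b s t)) by nia.
  rewrite E1, scaled_bound_iff in HB1 by lia.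
  rewrite E2, scaled_bound_iff in HB2 by lia.
  repeat split; auto.
  apply max_bound_iff; [lia|auto].
Qed.

End Correspondence.

Theorem lemma5p1 :
  exists C : R, forall (a b : Z) (B : R),
    0 < a -> 0 < b -> Z.gcd a b = 1 -> a * b <> 1 ->
    exists m n : nat,
      card_is (M_set a b B) m /\ card_is (ST_set a b B) n /\
      (Rabs (INR m - INR n) <= C)%R.
Proof.
  exists 3%R. intros a b B Ha Hb Hab Hab1.
  destruct (card_is_of_incl (M_set a b B) (box a b B)) as [m Hm].
  { intros p. apply M_set_in_box; assumption. }
  destruct (card_is_of_image (M_set a b B) (ST_set a b B) (st_of_xyz a b) m Hm)
    as [n Hn].
  { intros q Hq. exists (xyz_of_st a b q).
    split; [apply xyz_of_st_in_M|apply (st_of_xyz_of_st a b B)]; assumption. }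
  exists m, n. split; [exact Hm|split; [exact Hn|]].
  assert (Hnm : (n <= length (@nil (Z * Z * Z)) + m)%nat).
  { apply (card_le_of_left_inverse (ST_set a b B) (M_set a b B)
      (xyz_of_st a b) (st_of_xyz a b)); auto;
      intros q Hq;
      [apply (st_of_xyz_of_st a b B)|left; apply xyz_of_st_in_M]; assumption. }
  assert (Hmn : (m <= length (exceptional_st a b) + n)%nat).
  { apply (card_le_of_left_inverse (M_set a b B) (ST_set a b B)
      (st_of_xyz a b) (xyz_of_st a b)); auto; intros p Hp;
      [apply (xyz_of_st_of_xyz a b B)|apply st_of_xyz_in_ST]; assumption. }
  apply le_INR in Hnm, Hmn. rewrite plus_INR in Hnm, Hmn. simpl in Hnm, Hmn.
  apply Rabs_le. lra.
Qed.
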